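(* Let $\Gamma$ be a first-order expansion of $(\mathbb{Z};\mathrm{suc})$. If $\Gamma$ primitive positively defines a relation that is not Horn-definable over $(\mathbb{Z};\mathrm{suc})$, then $\Gamma$ also primitive positively defines a binary relation that is not Horn-definable over $(\mathbb{Z};\mathrm{suc})$.
   Context: $\mathrm{suc}^p=\{(x,y)\in\mathbb{Z}^2:y=x+p\}$ for $p\in\mathbb{Z}$, $\mathrm{suc}=\mathrm{suc}^1$. A first-order expansion of $(\mathbb{Z};\mathrm{suc})$ is a relational structure with domain $\mathbb{Z}$ whose relations are first-order definable in $(\mathbb{Z};\mathrm{suc})$ and in which $\mathrm{suc}$ is primitive positive definable. A relation is Horn-definable over $(\mathbb{Z};\mathrm{suc})$ if it is defined in $(\mathbb{Z};\mathrm{suc})$ by a quantifier-free formula in conjunctive normal form whose literals are of the form $\mathrm{suc}^p(x,y)$ or $\neg\mathrm{suc}^p(x,y)$ and in which each clause contains at most one positive (unnegated) literal. *)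

From mathcomp Require Import all_boot.
From Stdlib Require Import ZArith.
Set Implicit Arguments. Unset Strict Implicit. Unset Printing Implicit Defensive.

Definition relation (n : nat) := ('I_n -> Z) -> Prop.

Definition sucp (p x y : Z) : Prop := y = (x + p)%Z.

Inductive fo : Type :=
| FSuc : nat -> nat -> fo
| FEq  : nat -> nat -> fo
| FNot : fo -> fo
| FAnd : fo -> fo -> fo
| FEx  : nat -> fo -> fo.

Definition upd (v : nat -> Z) (i : nat) (z : Z) : nat -> Z :=
  fun k => if k == i then z else v k.

Fixpoint fo_sat (v : nat -> Z) (f : fo) : Prop :=
  match f with
  | FSuc i j => sucp 1 (v i) (v j)
  | FEq i j => v i = v j
  | FNot g => ~ fo_sat v g
  | FAnd g h => fo_sat v g /\ fo_sat v h
  | FEx i g => exists z : Z, fo_sat (upd v i z) g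
  end.

(* R (arity n) is defined by f: the tuple (v 0, ..., v (n-1)) is in R iff v satisfies f,
   for every valuation v (so f may only depend on x_0..x_{n-1}). *)
Definition fo_definable (n : nat) (R : relation n) : Prop :=
  exists f : fo, forall v : nat -> Z, R (fun k : 'I_n => v (nat_of_ord k)) <-> fo_sat v f.

Record structure := {
  sym : Type;
  ar : sym -> nat;
  interp : forall s : sym, relation (ar s)
}.

Inductive pp (G : structure) : Type :=
| PTrue : pp G
| PEq : nat -> nat -> pp G
| PAtom : forall s : sym G, ('I_(ar s) -> nat) -> pp G
| PAnd : pp G -> pp G -> pp G
| PEx : nat -> pp G -> pp G.

Fixpoint pp_sat (G : structure) (v : nat -> Z) (f : pp G) : Prop :=
  match f with
  | PTrue => True
  | PEq i j => v i = v j
  | PAtom s a => @interp G s (fun k => v (a k))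
  | PAnd g h => pp_sat v g /\ pp_sat v h
  | PEx i g => exists z : Z, pp_sat (upd v i z) g
  end.

Definition pp_definable (G : structure) (n : nat) (R : relation n) : Prop :=
  exists f : pp G, forall v : nat -> Z, R (fun k : 'I_n => v (nat_of_ord k)) <-> pp_sat v f.

Definition suc_rel : relation 2 :=
  fun t => sucp 1 (t ord0) (t (@Ordinal 2 1 isT)).

Definition fo_expansion (G : structure) : Prop :=
  (forall s : sym G, fo_definable (@interp G s)) /\ pp_definable G suc_rel.

Record literal := Lit { positive : bool; lp : Z; li : nat; lj : nat }.
Definition clause := list literal.
Definition cnf := list clause.

Definition lit_sat (v : nat -> Z) (l : literal) : Prop :=
  if positive l then sucp (lp l) (v (li l)) (v (lj l))
  else ~ sucp (lp l) (v (li l)) (v (lj l)).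

Definition clause_sat (v : nat -> Z) (c : clause) : Prop :=
  exists2 l, List.In l c & lit_sat v l.

Definition cnf_sat (v : nat -> Z) (F : cnf) : Prop :=
  forall c, List.In c F -> clause_sat v c.

Definition horn_cnf (F : cnf) : Prop :=
  forall c, List.In c F -> (count positive c <= 1)%nat.

Definition horn_definable (n : nat) (R : relation n) : Prop :=
  exists F : cnf, horn_cnf F /\
    forall v : nat -> Z, R (fun k : 'I_n => v (nat_of_ord k)) <-> cnf_sat v F.

(* Over (Z; suc) a first-order formula, and hence a pp-formula over a first-order
   expansion, is determined on its variables by which atoms x_j = x_i + p with |p| <= M
   hold, for some bound M (an Ehrenfeucht-Fraisse argument).  For such relations,
   Horn-definability is equivalent to closure under the extrapolations a + N (b - a)
   for arbitrarily large N: for large N this point satisfies exactly the atoms common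
   to a and b.
   Let R be pp-definable and not closed, of arity at least 3.  If some substitution
   x_j := x_i + d or some projection of R is not closed either, it has smaller arity.
   Otherwise R is closed after all: projections give points of R in which only one
   pair of coordinates is close, two of them with different close pairs combine, via a
   substitution, into a point of R whose coordinates are all far apart; a large
   extrapolation of two points of R is then similar to that point, unless some
   difference x_j - x_i is the same in both, in which case the closed substitution
   x_j := x_i + d applies. *)

From Pilot Require Import Defs.
From mathcomp Require Import all_boot.
From Stdlib Require Import ZArith.
From mathcomp Require Import zify.
From Stdlib Require Import Lia Classical FunctionalExtensionality.

Set Implicit Arguments.
Unset Strict Implicit.
Unset Printing Implicit Defensive.

Local Open Scope Z_scope.

Definition valuation := nat -> Z.

Lemma upd_eq (v : valuation) i z : upd v i z i = z.
Proof. by rewrite /upd eqxx. Qed.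

Lemma upd_neq (v : valuation) i z k : k <> i -> upd v i z k = v k.
Proof. by rewrite /upd; case: eqP. Qed.

Definition abs_sum (v : valuation) (S : seq nat) : Z :=
  foldr (fun x acc => Z.abs (v x) + acc) 0 S.

Lemma abs_sum_ge0 v S : 0 <= abs_sum v S.
Proof. by elim: S => //= x S IH; lia. Qed.

Lemma abs_le_abs_sum v S x : x \in S -> Z.abs (v x) <= abs_sum v S.
Proof.
elim: S => [|y S IH] //=; rewrite inE => /orP [/eqP ->|/IH]; have := @abs_sum_ge0 v S; lia.
Qed.

Definition similar (M : Z) (S : seq nat) (v w : valuation) : Prop :=
  forall i j, i \in S -> j \in S -> forall p, Z.abs p <= M ->
    (v j - v i = p <-> w j - w i = p).

Definition supported (P : valuation -> Prop) (S : seq nat) : Prop :=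
  forall v w, {in S, v =1 w} -> (P v <-> P w).

Definition determined (P : valuation -> Prop) (S : seq nat) (M : Z) : Prop :=
  forall v w, similar M S v w -> (P v <-> P w).

Definition local (P : valuation -> Prop) : Prop := exists M S, determined P S M.

Lemma similar_sym M S v w : similar M S v w -> similar M S w v.
Proof. by move=> H i j Hi Hj p Hp; rewrite (H i j). Qed.

Lemma similar_sub M M' S S' v w :
  M' <= M -> {subset S' <= S} -> similar M S v w -> similar M' S' v w.
Proof. by move=> HM HS H i j Hi Hj p Hp; apply: H; auto; lia. Qed.

Lemma determined_abs P S M : determined P S M -> determined P S (Z.abs M).
Proof. by move=> H v w Hs; apply: H; apply: similar_sub Hs => //; lia. Qed.

Lemma similar_upd M S v w x z z' :
  similar M S v w ->
  (forall i, i \in S -> i <> x -> forall p, Z.abs p <= M -> (z - v i = p <-> z' - w i = p)) ->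
  similar M S (upd v x z) (upd w x z').
Proof.
move=> Hs Hz i j Hi Hj p Hp.
case: (Nat.eq_dec i x) => [->|Hix]; case: (Nat.eq_dec j x) => [->|Hjx].
- by rewrite !upd_eq; lia.
- by rewrite !upd_eq !upd_neq //; have := Hz j Hj Hjx (- p); lia.
- by rewrite !upd_eq !upd_neq //; have := Hz i Hi Hix p; lia.
- by rewrite !upd_neq //; apply: Hs.
Qed.

(* The Ehrenfeucht-Fraisse step: a witness [z] for [v] is matched either by
   translating it along a coordinate it is close to, or by a value far from all of [w]. *)
Lemma similar_exists P S M x : 0 <= M -> determined P S M ->
  forall v w, similar (2 * M) S v w -> (exists z, P (upd v x z)) -> exists z, P (upd w x z).
Proof.
move=> HM HP v w Hs [z Hz].
have HsM : similar M S v w by apply: similar_sub Hs => //; lia.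
case: (classic (exists i0, i0 \in S /\ i0 <> x /\ Z.abs (z - v i0) <= M)).
- move=> [i0 [Hi0 [Hi0x Hnear]]]; exists (w i0 + (z - v i0)).
  apply/(HP (upd v x z)) => //; apply: similar_upd => // i Hi Hix p Hp.
  by have := Hs i i0 Hi Hi0 (p - (z - v i0)); lia.
- move=> Hfar; exists (M + 1 + abs_sum w S).
  apply/(HP (upd v x z)) => //; apply: similar_upd => // i Hi Hix p Hp.
  have Hz_far : M < Z.abs (z - v i).
  { by case: (Z_lt_le_dec M (Z.abs (z - v i))) => // Hle; case: Hfar; exists i. }
  have := @abs_le_abs_sum w _ _ Hi; have := @abs_sum_ge0 w S; lia.
Qed.

Lemma local_iff P Q : (forall v, P v <-> Q v) -> local P -> local Q.
Proof. by move=> E [M [S H]]; exists M, S => v w /H; rewrite !E. Qed.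

Lemma local_diff i j p : local (fun v => v j = v i + p).
Proof.
exists (Z.abs p), [:: i; j] => v w Hs.
have Hj : j \in [:: i; j] by rewrite !inE eqxx orbT.
by have := Hs i j (mem_head _ _) Hj p (Z.le_refl _); lia.
Qed.

Lemma local_not P : local P -> local (fun v => ~ P v).
Proof. by move=> [M [S H]]; exists M, S => v w /H ->. Qed.

Lemma local_and P Q : local P -> local Q -> local (fun v => P v /\ Q v).
Proof.
move=> [M1 [S1 H1]] [M2 [S2 H2]]; exists (Z.max M1 M2), (S1 ++ S2) => v w Hs.
rewrite (H1 v w) ?(H2 v w) //; apply: similar_sub Hs; try lia;
  by move=> x Hx; rewrite mem_cat Hx ?orbT.
Qed.

Lemma local_exists P x : local P -> local (fun v => exists z, P (upd v x z)).
Proof.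
move=> [M [S H]]; have {}H := determined_abs H; exists (2 * Z.abs M), S => v w Hs.
have HM : 0 <= Z.abs M by lia.
by split; [apply: similar_exists HM H _ _ Hs | apply: similar_exists HM H _ _ (similar_sym Hs)].
Qed.

Lemma local_comp P (s : nat -> nat) : local P -> local (fun v => P (v \o s)).
Proof.
move=> [M [S H]]; exists M, (map s S) => v w Hs; apply: H => i j Hi Hj.
by apply: Hs; exact: map_f.
Qed.

Lemma fo_sat_local f : local (fun v => fo_sat v f).
Proof.
elim: f => [i j|i j|g|g Hg h Hh|x g Hg] /=.
- exact: local_diff.
- by apply: (@local_iff _ _ _ (local_diff i j 0)) => v /=; lia.
- exact: local_not.
- exact: local_and.
- exact: (local_exists x Hg).
Qed.

Definition ord_ext n (a : 'I_n -> nat) (x : nat) : nat :=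
  if insub x is Some k then a k else 0%nat.

Lemma ord_ext_ord n (a : 'I_n -> nat) (k : 'I_n) : ord_ext a k = a k.
Proof. by rewrite /ord_ext valK. Qed.

Lemma fo_definable_local n (R : relation n) (a : 'I_n -> nat) :
  fo_definable R -> local (fun v => R (fun k => v (a k))).
Proof.
move=> [f Hf]; apply: local_iff (local_comp (ord_ext a) (fo_sat_local f)) => v.
have -> : (fun k => v (a k)) = (fun k : 'I_n => (v \o ord_ext a) k).
  by apply: functional_extensionality => k /=; rewrite ord_ext_ord.
by rewrite Hf.
Qed.

Lemma pp_sat_local (G : structure) (f : pp G) :
  (forall s : sym G, fo_definable (@interp G s)) -> local (fun v => pp_sat v f).
Proof.
move=> Hfo; elim: f => [|i j|s a|g Hg h Hh|x g Hg] /=.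
- by exists 0, [::] => v w.
- by apply: (@local_iff _ _ _ (local_diff i j 0)) => v /=; lia.
- exact: fo_definable_local.
- exact: local_and.
- exact: (local_exists x Hg).
Qed.

(* Outside [S] both valuations are replaced by the same, widely spaced values. *)
Lemma determined_of_local P S : local P -> supported P S -> exists M, determined P S M.
Proof.
move=> [M [S' H]] HS; exists M => v w Hs.
pose B := Z.abs M + 1 + abs_sum v S + abs_sum w S.
pose far (x : nat) := B * (Z.of_nat x + 1).
pose v' x := if x \in S then v x else far x.
pose w' x := if x \in S then w x else far x.
have Hfar x : B <= far x by rewrite /far /B; have := @abs_sum_ge0 v S; have := @abs_sum_ge0 w S; nia.
have -> : P v <-> P v' by apply: HS => x Hx; rewrite /v' Hx.
have -> : P w <-> P w' by apply: HS => x Hx; rewrite /w' Hx.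
apply: H => i j _ _ p Hp; rewrite /v' /w'.
case Hi: (i \in S); case Hj: (j \in S).
- exact: Hs.
- by have := @abs_le_abs_sum v _ _ Hi; have := @abs_le_abs_sum w _ _ Hi; have := Hfar j; lia.
- by have := @abs_le_abs_sum v _ _ Hj; have := @abs_le_abs_sum w _ _ Hj; have := Hfar i; lia.
- lia.
Qed.

Definition pp_def (G : structure) (P : valuation -> Prop) : Prop :=
  exists f : pp G, forall v, P v <-> pp_sat v f.

Lemma pp_def_determined (G : structure) P S :
  (forall s : sym G, fo_definable (@interp G s)) -> pp_def G P -> supported P S ->
  exists M, 0 <= M /\ determined P S M.
Proof.
move=> Hfo [f Hf] HS.
have Hloc : local P by apply: local_iff (pp_sat_local f Hfo) => v; rewrite Hf.
have [M HM] := determined_of_local Hloc HS.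
by exists (Z.abs M); split; [lia | exact: determined_abs].
Qed.

Definition ren (a b : nat) (x y : Z) : valuation := upd (upd (fun=> 0) a x) b y.

Lemma ren_supported P a b v : a <> b -> supported P [:: a; b] ->
  P (ren a b (v a) (v b)) <-> P v.
Proof.
move=> Hab HS; apply: HS => x; rewrite !inE => /orP [] /eqP ->.
  by rewrite /ren upd_neq ?upd_eq.
by rewrite /ren upd_eq.
Qed.

Section PPDefinability.
Variable G : structure.

Lemma pp_def_iff P Q : (forall v, P v <-> Q v) -> pp_def G P -> pp_def G Q.
Proof. by move=> E [f Hf]; exists f => v; rewrite -E. Qed.

Lemma pp_def_and P Q : pp_def G P -> pp_def G Q -> pp_def G (fun v => P v /\ Q v).
Proof. by move=> [f Hf] [g Hg]; exists (PAnd f g) => v /=; rewrite Hf Hg. Qed.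

Lemma pp_def_exists P x : pp_def G P -> pp_def G (fun v => exists z, P (upd v x z)).
Proof. by move=> [f Hf]; exists (PEx x f) => v /=; split => -[z /Hf Hz]; exists z. Qed.

Lemma pp_def_eq i j : pp_def G (fun v => v i = v j).
Proof. by exists (PEq G i j). Qed.

Lemma pp_def_copy P x i : x <> i -> pp_def G P -> pp_def G (fun v => P (upd v x (v i))).
Proof.
move=> Hxi HP; have Hix : i <> x by lia.
have := pp_def_exists x (pp_def_and (pp_def_eq x i) HP).
apply: pp_def_iff => v; split; first by move=> [z []]; rewrite upd_eq upd_neq // => ->.
by move=> H; exists (v i); rewrite upd_eq upd_neq.
Qed.

(* The values of [x_i, x_j] are first copied into fresh variables, since [i] or [j]
   may coincide with [a] or [b]. *)
Lemma pp_def_rename2 P a b i j : a <> b -> supported P [:: a; b] -> pp_def G P ->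
  pp_def G (fun v => P (ren a b (v i) (v j))).
Proof.
move=> Hab HS HP; set F1 := (a + b + i + j).+1; set F2 := F1.+1.
have Q1 := pp_def_copy (x := b) (i := F2) ltac:(lia) HP.
have Q2 := pp_def_copy (x := a) (i := F1) ltac:(lia) Q1.
have Q3 := pp_def_copy (x := F2) (i := j) ltac:(lia) Q2.
have Q4 := pp_def_copy (x := F1) (i := i) ltac:(lia) Q3.
apply: pp_def_iff Q4 => v /=; rewrite -(ren_supported _ Hab HS).
by rewrite !(upd_eq, upd_neq) //; lia.
Qed.

Hypothesis Hsuc : pp_definable G suc_rel.

Lemma pp_def_succ i j : pp_def G (fun v => v j = v i + 1).
Proof.
have H01 : pp_def G (fun v => v 1%nat = v 0%nat + 1) by case: Hsuc => f Hf; exists f.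
have HS : supported (fun v => v 1%nat = v 0%nat + 1) [:: 0%nat; 1%nat].
  by move=> v w E; rewrite !E ?inE ?eqxx ?orbT.
by apply: pp_def_iff (pp_def_rename2 i j _ HS H01) => // v; rewrite /ren !(upd_eq, upd_neq).
Qed.

Lemma pp_def_diff_nat i j (n : nat) : pp_def G (fun v => v j = v i + Z.of_nat n).
Proof.
elim: n i j => [|n IH] i j.
  by apply: pp_def_iff (pp_def_eq j i) => v; lia.
have [HiF HjF] : i <> (i + j).+1 /\ j <> (i + j).+1 by lia.
have := pp_def_exists (i + j).+1 (pp_def_and (IH i (i + j).+1) (pp_def_succ (i + j).+1 j)).
apply: pp_def_iff => v; split => [[z []] | H]; last exists (v i + Z.of_nat n);
  rewrite !upd_eq !upd_neq //; lia.
Qed.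

Lemma pp_def_diff i j d : pp_def G (fun v => v j = v i + d).
Proof.
case: (Z_le_dec 0 d) => Hd.
  by apply: pp_def_iff (pp_def_diff_nat i j (Z.to_nat d)) => v; lia.
by apply: pp_def_iff (pp_def_diff_nat j i (Z.to_nat (- d))) => v; lia.
Qed.

Lemma pp_def_subst P i j d : i <> j -> pp_def G P ->
  pp_def G (fun v => P (upd v j (v i + d))).
Proof.
move=> Hij HP; have := pp_def_exists j (pp_def_and (pp_def_diff i j d) HP).
apply: pp_def_iff => v; split; first by move=> [z []]; rewrite upd_eq upd_neq // => ->.
by move=> H; exists (v i + d); rewrite upd_eq upd_neq.
Qed.

End PPDefinability.

Definition extrap (a b : valuation) (N : Z) : valuation := fun x => a x + N * (b x - a x).

Definition extrap_closed (P : valuation -> Prop) : Prop :=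
  forall a b, P a -> P b -> forall N0, exists N, N0 <= N /\ P (extrap a b N).

Definition eventually (Q : Z -> Prop) : Prop := exists N0, forall N, N0 <= N -> Q N.

Lemma eventually_and Q1 Q2 :
  eventually Q1 -> eventually Q2 -> eventually (fun N => Q1 N /\ Q2 N).
Proof.
by move=> [N1 H1] [N2 H2]; exists (Z.max N1 N2) => N HN; split; [apply: H1 | apply: H2]; lia.
Qed.

Lemma eventually_forall T (s : list T) (Q : T -> Z -> Prop) :
  (forall x, List.In x s -> eventually (Q x)) ->
  eventually (fun N => forall x, List.In x s -> Q x N).
Proof.
elim: s => [|y s IH] H; first by exists 0 => N _ x [].
have [N Hys] := eventually_and (H y (or_introl erefl)) (IH (fun x Hx => H x (or_intror Hx))).
by exists N => N' /Hys [Hy Hs] x [<- | /Hs].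
Qed.

Lemma eventually_unbounded (Q : Z -> Prop) : eventually Q -> forall N0, exists N, N0 <= N /\ Q N.
Proof. by move=> [N1 H] N0; exists (Z.max N0 N1); split; [lia | apply: H; lia]. Qed.

Lemma extrap_diff a b N i j :
  extrap a b N j - extrap a b N i = (a j - a i) + N * ((b j - b i) - (a j - a i)).
Proof. rewrite /extrap; ring. Qed.

Lemma abs_extrap_ge d d' N : d <> d' -> 0 <= N -> N - Z.abs d <= Z.abs (d + N * (d' - d)).
Proof.
move=> H HN; have : d' - d >= 1 \/ d' - d <= -1 by lia.
by case=> ?; nia.
Qed.

Lemma extrap_diff_eq a b N i j p : 0 <= N -> Z.abs p + Z.abs (a j - a i) < N ->
  (extrap a b N j - extrap a b N i = p <-> a j - a i = p /\ b j - b i = p).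
Proof.
move=> HN Hlt; rewrite extrap_diff.
case: (Z.eq_dec (b j - b i) (a j - a i)) => [-> | Hd]; first by split; nia.
by have := abs_extrap_ge (not_eq_sym Hd) HN; split; lia.
Qed.

Lemma extrap_far a b S K N i j : 0 <= K -> i \in S -> j \in S ->
  b j - b i <> a j - a i -> K + 1 + 2 * abs_sum a S <= N ->
  K < Z.abs (extrap a b N j - extrap a b N i).
Proof.
move=> HK Hi Hj Hd HN; rewrite extrap_diff.
have := abs_extrap_ge (N := N) (not_eq_sym Hd); have := @abs_le_abs_sum a _ _ Hi.
by have := @abs_le_abs_sum a _ _ Hj; have := @abs_sum_ge0 a S; lia.
Qed.

Definition lit_atom (v : valuation) (l : literal) : Prop := v (lj l) = v (li l) + lp l.

Lemma lit_satE v l : lit_sat v l <-> if Defs.positive l then lit_atom v l else ~ lit_atom v l.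
Proof. by rewrite /lit_sat /sucp /lit_atom; case: (Defs.positive l). Qed.

Lemma extrap_lit_atom v w l :
  eventually (fun N => lit_atom (extrap v w N) l <-> lit_atom v l /\ lit_atom w l).
Proof.
exists (Z.abs (lp l) + Z.abs (v (lj l) - v (li l)) + 1) => N HN.
have := @extrap_diff_eq v w N (li l) (lj l) (lp l) ltac:(lia) ltac:(lia).
by rewrite /lit_atom; lia.
Qed.

Lemma count_positive_gt0 (c : clause) l :
  List.In l c -> Defs.positive l -> (0 < count Defs.positive c)%nat.
Proof. by elim: c => [|x c IH] //= [-> -> | /IH H /H]; lia. Qed.

Lemma horn_clause_positive (c : clause) l1 l2 : (count Defs.positive c <= 1)%nat ->
  List.In l1 c -> List.In l2 c -> Defs.positive l1 -> Defs.positive l2 -> l1 = l2.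
Proof.
elim: c => [|x c IH] //= Hc [E1 | H1] [E2 | H2] P1 P2; subst.
- by [].
- by move: Hc; rewrite P1 /=; have := count_positive_gt0 H2 P2; lia.
- by move: Hc; rewrite P2 /=; have := count_positive_gt0 H1 P1; lia.
- by apply: IH => //; case: (Defs.positive x) Hc; lia.
Qed.

(* Were the extrapolation to falsify [c], the atoms of all negative literals would hold
   in [v] and [w], so both satisfy [c] through its unique positive literal, whose atom
   then holds in the extrapolation as well. *)
Lemma horn_clause_extrap v w (c : clause) : (count Defs.positive c <= 1)%nat ->
  clause_sat v c -> clause_sat w c -> eventually (fun N => clause_sat (extrap v w N) c).
Proof.
move=> Hh [l1 Hl1 S1] [l2 Hl2 S2].
have [N0 HN] := eventually_forall (fun l (_ : List.In l c) => extrap_lit_atom v w l).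
exists N0 => N /HN Hat; apply: NNPP => Hn.
have Hfalse l : List.In l c -> ~ lit_sat (extrap v w N) l by move=> Hl Hs; apply: Hn; exists l.
have Hneg l : List.In l c -> Defs.positive l = false -> lit_atom v l /\ lit_atom w l.
  by move=> Hl Hp; apply/Hat => //; apply: NNPP; have := Hfalse l Hl; rewrite lit_satE Hp.
move: S1 S2; rewrite !lit_satE.
case P1: (Defs.positive l1); last by have := Hneg l1 Hl1 P1; tauto.
case P2: (Defs.positive l2); last by have := Hneg l2 Hl2 P2; tauto.
move: (horn_clause_positive Hh Hl1 Hl2 P1 P2) => <- S1 S2.
by apply: (Hfalse l1 Hl1); rewrite lit_satE P1 Hat.
Qed.

Lemma horn_cnf_extrap F v w : horn_cnf F -> cnf_sat v F -> cnf_sat w F ->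
  eventually (fun N => cnf_sat (extrap v w N) F).
Proof.
move=> Hh Hv Hw; apply: eventually_forall => c Hc.
exact: horn_clause_extrap (Hh c Hc) (Hv c Hc) (Hw c Hc).
Qed.

Definition rel_pred n (R : relation n) : valuation -> Prop := fun v => R (fun k => v k).

Lemma extrap_closed_of_horn n (R : relation n) : horn_definable R -> extrap_closed (rel_pred R).
Proof.
move=> [F [Hh HF]] a b /HF Ha /HF Hb N0.
have [N [HN Hsat]] := eventually_unbounded (horn_cnf_extrap Hh Ha Hb) N0.
by exists N; split => //; apply/HF.
Qed.

Definition atom := (nat * nat * Z)%type.

Definition holds (v : valuation) (a : atom) : Prop := let '(i, j, p) := a in v j = v i + p.

Definition holdsb (v : valuation) (a : atom) : bool := let '(i, j, p) := a in Z.eqb (v j) (v i + p).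

Lemma holdsbP v a : holdsb v a = true <-> holds v a.
Proof. by case: a => [[i j] p]; exact: Z.eqb_eq. Qed.

Definition atom_lit (b : bool) (a : atom) : literal := let '(i, j, p) := a in Lit b p i j.

Lemma atom_lit_sat v b a : lit_sat v (atom_lit b a) <-> if b then holds v a else ~ holds v a.
Proof. by case: a => [[i j] p]; case: b. Qed.

Definition all_hold (v : valuation) (s : list atom) : Prop := forall a, List.In a s -> holds v a.

Definition neg_clause (s : list atom) : clause := List.map (atom_lit false) s.

Lemma neg_clause_sat v s : clause_sat v (neg_clause s) <-> ~ all_hold v s.
Proof.
rewrite /clause_sat /neg_clause; split.
  by move=> [l /List.in_map_iff [a [<- Ha]] /atom_lit_sat Hn] Hall; exact/Hn/Hall.
move=> Hn; apply: NNPP => Hno; apply: Hn => a Ha; apply: NNPP => Hna.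
by apply: Hno; exists (atom_lit false a); [exact: List.in_map | exact/atom_lit_sat].
Qed.

Lemma count_neg_clause s : count Defs.positive (neg_clause s) = 0%nat.
Proof. by elim: s => [|[[i j] p] s IH]. Qed.

Fixpoint sublists (s : list atom) : list (list atom) :=
  if s is x :: s' then List.map (cons x) (sublists s') ++ sublists s' else [:: nil].

Lemma filter_in_sublists f s : List.In (List.filter f s) (sublists s).
Proof.
elim: s => [|x s IH] /=; first by left.
by case: (f x); apply: List.in_or_app; [left; exact: List.in_map | right].
Qed.

Definition zrange (M : Z) : list Z :=
  List.map (fun k => Z.of_nat k - M) (List.seq 0 (Z.to_nat (2 * M + 1))).

Lemma in_zrange M p : 0 <= M -> (List.In p (zrange M) <-> Z.abs p <= M).
Proof.
move=> HM; rewrite /zrange List.in_map_iff; split.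
  by move=> [k [<- /List.in_seq Hk]]; lia.
by move=> Hp; exists (Z.to_nat (p + M)); rewrite List.in_seq; lia.
Qed.

Lemma In_mem (T : eqType) (x : T) (s : seq T) : List.In x s <-> x \in s.
Proof.
elim: s => [|y s IH] //=; rewrite inE.
by split => [[-> | /IH ->] | /orP [/eqP -> | /IH]]; rewrite ?eqxx ?orbT; auto.
Qed.

Definition atoms (n : nat) (M : Z) : list atom :=
  List.flat_map (fun i => List.flat_map (fun j =>
    List.map (fun p => (i, j, p)) (zrange M)) (iota 0 n)) (iota 0 n).

Lemma in_atoms n M i j p : 0 <= M ->
  List.In (i, j, p) (atoms n M) <-> [/\ i \in iota 0 n, j \in iota 0 n & Z.abs p <= M].
Proof.
move=> HM; rewrite /atoms List.in_flat_map; split.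
  move=> [i' [/In_mem Hi /List.in_flat_map [j' [/In_mem Hj /List.in_map_iff [p' [[<- <- <-]]]]]]].
  by move/in_zrange => /(_ HM).
move=> [Hi Hj Hp]; exists i; split; first exact/In_mem.
apply/List.in_flat_map; exists j; split; first exact/In_mem.
by apply/List.in_map_iff; exists p; split; last exact/in_zrange.
Qed.

Section HornOfClosed.
Variables (n : nat) (M : Z) (P : valuation -> Prop).
Hypotheses (HM : 0 <= M) (HD : determined P (iota 0 n) M) (HCl : extrap_closed P).

Definition atom_type (v : valuation) : list atom := List.filter (holdsb v) (atoms n M).

Lemma in_atom_type v a : List.In a (atom_type v) <-> List.In a (atoms n M) /\ holds v a.
Proof. by rewrite /atom_type List.filter_In holdsbP. Qed.

Lemma extrap_holds u y N a : 1 + M + 2 * abs_sum u (iota 0 n) <= N ->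
  List.In a (atoms n M) -> (holds (extrap u y N) a <-> holds u a /\ holds y a).
Proof.
case: a => [[i j] p] HN /(in_atoms _ _ _ _ HM) [Hi Hj Hp] /=.
have := @abs_le_abs_sum u _ _ Hi; have := @abs_le_abs_sum u _ _ Hj.
have := @abs_sum_ge0 u (iota 0 n) => *.
by have := @extrap_diff_eq u y N i j p ltac:(lia) ltac:(lia); lia.
Qed.

(* Points of [P] falsifying single atoms are merged into one by extrapolation. *)
Lemma extrap_avoid sg y0 (avoid : list atom) :
  (forall b, List.In b sg -> List.In b (atoms n M)) -> P y0 -> all_hold y0 sg ->
  (forall a, List.In a avoid ->
     List.In a (atoms n M) /\ exists y, [/\ P y, all_hold y sg & ~ holds y a]) ->
  exists u, [/\ P u, all_hold u sg & forall a, List.In a avoid -> ~ holds u a].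
Proof.
move=> Hsg Py0 Sy0; elim: avoid => [|a avoid IH] Havoid; first by exists y0.
have [u [Pu Su Nu]] := IH (fun a' Ha' => Havoid a' (or_intror Ha')).
have [Ha [y [Py Sy Nya]]] := Havoid a (or_introl erefl).
have [N [HN PN]] := HCl Pu Py (1 + M + 2 * abs_sum u (iota 0 n)).
exists (extrap u y N); split => // [b Hb | a' [<- | Ha']].
- by apply/(extrap_holds _ HN (Hsg b Hb)); split; [exact: Su | exact: Sy].
- by rewrite (extrap_holds _ HN Ha); tauto.
- by rewrite (extrap_holds _ HN (proj1 (Havoid a' (or_intror Ha')))); have := Nu a' Ha'; tauto.
Qed.

(* Extrapolation yields a point of [P] with exactly the type of [x]; by
   determinedness [x] itself is then in [P]. *)
Lemma type_realized x y0 :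
  P y0 -> all_hold y0 (atom_type x) ->
  (forall a, List.In a (atoms n M) -> ~ holds x a ->
     exists y, [/\ P y, all_hold y (atom_type x) & ~ holds y a]) ->
  P x.
Proof.
move=> Py0 Sy0 Hsep.
set avoid := List.filter (fun a => ~~ holdsb x a) (atoms n M).
have Havoid a : List.In a avoid ->
    List.In a (atoms n M) /\ exists y, [/\ P y, all_hold y (atom_type x) & ~ holds y a].
  by move=> /List.filter_In [Ha /negP Hxa]; split => //; apply: Hsep => // /holdsbP.
have Hsub b : List.In b (atom_type x) -> List.In b (atoms n M) by move/in_atom_type => [].
have [u [Pu Su Nu]] := extrap_avoid Hsub Py0 Sy0 Havoid.
suff Hsim : similar M (iota 0 n) u x by exact: (proj1 (HD Hsim) Pu).
move=> i j Hi Hj p Hp.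
have Ha : List.In (i, j, p) (atoms n M) by apply/in_atoms.
suff: holds u (i, j, p) <-> holds x (i, j, p) by rewrite /=; lia.
split => H; last by apply: Su; apply/in_atom_type.
apply: NNPP => Hx; apply: (Nu (i, j, p)) H; apply/List.filter_In; split => //.
by apply/negP => /holdsbP.
Qed.

Lemma type_clause sg : exists C : clause, [/\ (count Defs.positive C <= 1)%nat,
  forall v, P v -> clause_sat v C & forall v, ~ P v -> atom_type v = sg -> ~ clause_sat v C].
Proof.
case: (classic (exists x, ~ P x /\ atom_type x = sg)) => [[x [Px Ex]] | Hno]; last first.
  exists [:: Lit true 0 0 0]; split => // [v _ | v Hv Ev]; last by case: Hno; exists v.
  by exists (Lit true 0 0 0); [left | rewrite /lit_sat /sucp /=; lia].
have Hneg v : atom_type v = sg -> ~ clause_sat v (neg_clause sg).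
  by move=> <- /neg_clause_sat; apply => b /in_atom_type [].
case: (classic (exists y0, P y0 /\ all_hold y0 sg)) => [[y0 [Py0 Sy0]] | HnoP]; last first.
  exists (neg_clause sg); split => [|v Pv|v _]; first by rewrite count_neg_clause.
    by apply/neg_clause_sat => Sv; apply: HnoP; exists v.
  exact: Hneg.
case: (classic (exists a, [/\ List.In a (atoms n M), ~ holds x a &
  forall y, P y -> all_hold y sg -> holds y a])) => [[a [Ha Hxa Himp]] | Hnoa]; last first.
  case: Px; apply: (type_realized Py0); rewrite Ex // => a Ha Hxa.
  by apply: NNPP => Hy; apply: Hnoa; exists a; split => // y Py Sy; apply: NNPP => Hya; apply: Hy; exists y.
exists (atom_lit true a :: neg_clause sg); split.
- by rewrite /= count_neg_clause; case: a {Ha Hxa Himp} => [[]].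
- move=> v Pv; case: (classic (all_hold v sg)) => [Sv | /neg_clause_sat [l Hl Hs]].
    by exists (atom_lit true a); [left | apply/atom_lit_sat; exact: Himp].
  by exists l; [right | ].
- move=> v Pv Ev [l [<- /atom_lit_sat Hva | Hl Hs]]; last by apply: (Hneg v Ev); exists l.
  suff: List.In a (atom_type x) by move/in_atom_type => [].
  by rewrite Ex -Ev; apply/in_atom_type.
Qed.

Lemma horn_cnf_of_closed : exists F, horn_cnf F /\ forall v, P v <-> cnf_sat v F.
Proof.
suff [F [HF HP Hn]] : exists F, [/\ horn_cnf F, forall v, P v -> cnf_sat v F &
    forall v, ~ P v -> List.In (atom_type v) (sublists (atoms n M)) -> ~ cnf_sat v F].
  exists F; split => // v; split; first exact: HP.
  by move=> Hv; apply: NNPP => Pv; exact: (Hn v Pv (filter_in_sublists _ _) Hv).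
elim: (sublists (atoms n M)) => [|sg Sg [F [HF HP Hn]]].
  by exists nil; split => [c [] | v _ c [] | v _ []].
have [C [HC HCP HCn]] := type_clause sg.
exists (C :: F); split => [c [<- | /HF] // | v Pv c [<- | Hc] | v Pv [Ev | Hin] Hs].
- exact: HCP.
- exact: HP.
- by apply: (HCn v Pv (esym Ev)); apply: Hs; left.
- by apply: (Hn v Pv Hin) => c Hc; apply: Hs; right.
Qed.

End HornOfClosed.

Lemma horn_definable_of_closed n (R : relation n) M : 0 <= M ->
  determined (rel_pred R) (iota 0 n) M -> extrap_closed (rel_pred R) -> horn_definable R.
Proof. exact: horn_cnf_of_closed. Qed.

Lemma three_distinct (S : seq nat) : uniq S -> (3 <= size S)%nat ->
  exists j1 j2 j3, [/\ j1 \in S, j2 \in S, j3 \in S & [/\ j1 <> j2, j1 <> j3 & j2 <> j3]].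
Proof.
case: S => [|s1 [|s2 [|s3 S]]] //= /and3P [H1 H2 _] _; exists s1, s2, s3.
move: H1 H2; rewrite !inE !negb_or => /andP [/eqP ? /andP [/eqP ? _]] /andP [/eqP ? _].
by split; rewrite ?eqxx ?orbT.
Qed.

Lemma two_others (S : seq nat) m : uniq S -> (3 <= size S)%nat ->
  exists al be, [/\ al \in S, be \in S & [/\ al <> be, al <> m & be <> m]].
Proof.
move=> HU H3; have [j1 [j2 [j3 [H1 H2 H3' [E12 E13 E23]]]]] := three_distinct HU H3.
case: (Nat.eq_dec j1 m) => [<- | N1]; first by exists j2, j3; split => //; split; lia.
case: (Nat.eq_dec j2 m) => [<- | N2]; first by exists j1, j3; split => //; split; lia.
by exists j1, j2; split => //; split; lia.
Qed.

Definition same_pair (x y i j : nat) : Prop := (x = i /\ y = j) \/ (x = j /\ y = i).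

Section ArityReduction.
Variables (P : valuation -> Prop) (S : seq nat) (M : Z).
Hypotheses (HM : 0 <= M) (HU : uniq S) (HS3 : (3 <= size S)%nat).
Hypotheses (HSupp : supported P S) (HD : determined P S M).
Hypothesis Hsubst : forall i j d, i \in S -> j \in S -> i <> j ->
  extrap_closed (fun v => P (upd v j (v i + d))).
Hypothesis Hproj : forall j, j \in S -> extrap_closed (fun v => exists z, P (upd v j z)).

Definition spread (K : Z) (c : valuation) : Prop :=
  forall x y, x \in S -> y \in S -> x <> y -> K < Z.abs (c y - c x).

Definition unique_close_pair (c : valuation) (i j : nat) : Prop :=
  [/\ i \in S, j \in S, i <> j, Z.abs (c j - c i) <= M &
      forall x y, x \in S -> y \in S -> x <> y -> ~ same_pair x y i j -> M < Z.abs (c y - c x)].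

Lemma P_upd_self v j : P (upd v j (v j)) <-> P v.
Proof. by apply: HSupp => x _; rewrite /upd; case: eqP => [->|]. Qed.

Lemma spread_similar c c' : spread M c -> spread M c' -> similar M S c c'.
Proof.
move=> Hc Hc' x y Hx Hy p Hp; case: (Nat.eq_dec x y) => [-> | Hxy]; first lia.
by have := Hc x y Hx Hy Hxy; have := Hc' x y Hx Hy Hxy; lia.
Qed.

Lemma unique_close_pair_eq c i j x y : unique_close_pair c i j -> x \in S -> y \in S -> x <> y ->
  Z.abs (c y - c x) <= M -> same_pair x y i j.
Proof.
move=> [_ _ _ _ Hfar] Hx Hy Hxy Hle; apply: NNPP => Hn.
by have := Hfar x y Hx Hy Hxy Hn; lia.
Qed.

Lemma unique_close_pair_similar c c' i j : unique_close_pair c i j -> unique_close_pair c' i j -> c j - c i = c' j - c' i ->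
  similar M S c c'.
Proof.
move=> Nc Nc' E x y Hx Hy p Hp; case: (Nat.eq_dec x y) => [-> | Hxy]; first lia.
case: (classic (same_pair x y i j)) => [[[-> ->] | [-> ->]] | Hn]; [lia | lia |].
by case: Nc => [_ _ _ _ /(_ x y Hx Hy Hxy Hn)]; case: Nc' => [_ _ _ _ /(_ x y Hx Hy Hxy Hn)]; lia.
Qed.

Definition grid (x : nat) : Z := (2 * M + 1) * Z.of_nat x.

Lemma grid_far x y : x <> y -> 2 * M + 1 <= Z.abs (grid y - grid x).
Proof.
move=> Hxy; have : Z.of_nat y - Z.of_nat x >= 1 \/ Z.of_nat x - Z.of_nat y >= 1 by lia.
by rewrite /grid; case=> ?; nia.
Qed.

Lemma upd_unique_close_pair A i j z : spread (2 * M) A -> i \in S -> j \in S -> i <> j ->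
  Z.abs (z - A i) <= M -> unique_close_pair (upd A j z) i j.
Proof.
move=> SA Hi Hj Hij Hz; split => //; first by rewrite upd_eq upd_neq.
move=> x y Hx Hy Hxy Hn.
case: (Nat.eq_dec x j) => [Ex | Nx]; case: (Nat.eq_dec y j) => [Ey | Ny].
- by case: Hxy; rewrite Ex Ey.
- have Nyi : i <> y by move=> E; apply: Hn; right.
  by rewrite Ex upd_eq upd_neq //; have := SA i y Hi Hy Nyi; lia.
- have Nxi : i <> x by move=> E; apply: Hn; left.
  by rewrite Ey upd_eq upd_neq //; have := SA i x Hi Hx Nxi; lia.
- by rewrite !upd_neq //; have := SA x y Hx Hy Hxy; lia.
Qed.

Lemma grid_unique_close_pair i j d : i \in S -> j \in S -> i <> j -> Z.abs d <= M ->
  unique_close_pair (upd grid j (grid i + d)) i j.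
Proof.
move=> Hi Hj Hij Hd; apply: upd_unique_close_pair => //; last lia.
by move=> x y _ _ /grid_far; lia.
Qed.

Lemma extrap_fixed_diff a b x y : x \in S -> y \in S -> x <> y -> P a -> P b ->
  b y - b x = a y - a x -> forall N0, exists N, N0 <= N /\ P (extrap a b N).
Proof.
move=> Hx Hy Hxy Pa Pb E N0; set d := a y - a x.
have Pa' : P (upd a y (a x + d)) by rewrite /d Zplus_minus P_upd_self.
have Pb' : P (upd b y (b x + d)) by rewrite /d -E Zplus_minus P_upd_self.
have [N [HN PN]] := @Hsubst x y d Hx Hy Hxy _ _ Pa' Pb' N0; exists N; split => //.
have Ed : extrap a b N x + d = extrap a b N y by have := extrap_diff a b N x y; rewrite E /d; lia.
by move: PN; rewrite Ed P_upd_self.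
Qed.

Lemma spread_extrap a b : (exists u, P u /\ spread M u) ->
  (forall x y, x \in S -> y \in S -> x <> y -> b y - b x <> a y - a x) ->
  forall N0, exists N, N0 <= N /\ P (extrap a b N).
Proof.
move=> [u [Pu Su]] Hinj N0; set N := Z.max N0 (M + 1 + 2 * abs_sum a S).
exists N; split; first lia.
suff /(spread_similar Su) /HD <- : spread M (extrap a b N) by [].
by move=> x y Hx Hy Hxy; apply: extrap_far HM Hx Hy (Hinj x y Hx Hy Hxy) _; rewrite /N; lia.
Qed.

(* Both points are first moved onto the grid, where they agree on [x_be - x_al];
   extrapolating through the substitution [x_be := x_al + d] keeps this difference
   and separates every other pair. *)
Lemma spread_of_close_pairs_grid c1 c2 i m i' m' al be :
  P c1 -> unique_close_pair c1 i m -> P c2 -> unique_close_pair c2 i' m' -> ~ same_pair i m i' m' ->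
  al \in S -> be \in S -> al <> be -> al <> m -> be <> m -> al <> m' -> be <> m' ->
  exists u, P u /\ spread M u.
Proof.
move=> P1 N1 P2 N2 Hdiff Hal Hbe Hab Ham Hbm Ham' Hbm'.
set p := upd grid m (grid i + (c1 m - c1 i)); set q := upd grid m' (grid i' + (c2 m' - c2 i')).
have Np : unique_close_pair p i m by case: N1 => Hi Hm Him Hd _; exact: grid_unique_close_pair.
have Nq : unique_close_pair q i' m' by case: N2 => Hi Hm Him Hd _; exact: grid_unique_close_pair.
have Pp : P p.
  suff Hs : c1 m - c1 i = p m - p i by apply/(HD (unique_close_pair_similar N1 Np Hs)).
  by case: N1 => _ _ Him _ _; rewrite /p upd_eq upd_neq; lia.
have Pq : P q.
  suff Hs : c2 m' - c2 i' = q m' - q i' by apply/(HD (unique_close_pair_similar N2 Nq Hs)).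
  by case: N2 => _ _ Him _ _; rewrite /q upd_eq upd_neq; lia.
have Efix : q be - q al = p be - p al by rewrite /p /q !upd_neq.
have [N [HN PN]] := extrap_fixed_diff Hal Hbe Hab Pp Pq Efix (M + 1 + 2 * abs_sum p S).
exists (extrap p q N); split => // x y Hx Hy Hxy.
case: (Z.eq_dec (q y - q x) (p y - p x)) => Hd; last by apply: extrap_far HM Hx Hy Hd _; lia.
rewrite extrap_diff Hd Z.sub_diag Z.mul_0_r Z.add_0_r.
case: (Z_lt_le_dec M (Z.abs (p y - p x))) => // Hle; exfalso.
have := unique_close_pair_eq Np Hx Hy Hxy Hle; rewrite -Hd in Hle.
by have := unique_close_pair_eq Nq Hx Hy Hxy Hle; move: Hdiff; rewrite /same_pair; lia.
Qed.

Lemma unique_close_pair_sym c i j : unique_close_pair c i j -> unique_close_pair c j i.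
Proof.
case=> Hi Hj Hij Hd Hfar; split => //; [lia | lia |].
by move=> x y Hx Hy Hxy Hn; apply: Hfar => // Hs; apply: Hn; move: Hs; rewrite /same_pair; lia.
Qed.

Lemma spread_of_close_pairs c1 c2 i1 j1 i2 j2 :
  P c1 -> unique_close_pair c1 i1 j1 -> P c2 -> unique_close_pair c2 i2 j2 -> ~ same_pair i1 j1 i2 j2 ->
  exists u, P u /\ spread M u.
Proof.
move=> P1 N1 P2 N2; rewrite /same_pair => Hdiff.
have [Hi1 Hj1 Hij1 _ _] := N1; have [Hi2 Hj2 Hij2 _ _] := N2.
have grid_case := @spread_of_close_pairs_grid c1 c2.
case: (Nat.eq_dec j1 j2) => [E | Ejj].
  have [al [be [Ha Hb [Hab Ham Hbm]]]] := two_others j1 HU HS3.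
  by apply: (grid_case _ _ _ _ al be P1 N1 P2 N2) => //; rewrite -E.
case: (Nat.eq_dec j1 i2) => [E | Eji].
  have [al [be [Ha Hb [Hab Ham Hbm]]]] := two_others j1 HU HS3.
  apply: (grid_case _ _ _ _ al be P1 N1 P2 (unique_close_pair_sym N2)); rewrite ?/same_pair -?E //; lia.
case: (Nat.eq_dec i1 j2) => [E | Eij].
  have [al [be [Ha Hb [Hab Ham Hbm]]]] := two_others i1 HU HS3.
  apply: (grid_case _ _ _ _ al be P1 (unique_close_pair_sym N1) P2 N2); rewrite ?/same_pair -?E //; lia.
case: (Nat.eq_dec i1 i2) => [E | Eii].
  have [al [be [Ha Hb [Hab Ham Hbm]]]] := two_others i1 HU HS3.
  apply: (grid_case _ _ _ _ al be P1 (unique_close_pair_sym N1) P2 (unique_close_pair_sym N2)); rewrite ?/same_pair -?E //; lia.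
by apply: (grid_case _ _ _ _ i1 i2 P1 N1 P2 N2) => //; lia.
Qed.

Lemma close_of_not_spread A j z : spread (2 * M) A -> j \in S -> ~ spread M (upd A j z) ->
  exists i, [/\ i \in S, i <> j & Z.abs (z - A i) <= M].
Proof.
move=> SA Hj Hns; apply: NNPP => Hno; apply: Hns => x y Hx Hy Hxy.
apply: NNPP => /Z.nlt_ge Hle; apply: Hno.
case: (Nat.eq_dec x j) => [Ex | Nx]; case: (Nat.eq_dec y j) => [Ey | Ny].
- by case: Hxy; rewrite Ex Ey.
- by exists y; move: Hle; rewrite Ex upd_eq upd_neq //; split => //; lia.
- by exists x; move: Hle; rewrite Ey upd_eq upd_neq //; split => //; lia.
- by move: Hle; rewrite !upd_neq //; have := SA x y Hx Hy Hxy; lia.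
Qed.

(* Closure of the projection along [x_j] turns an extrapolation of [a] and [b], which
   is [2M]-spread, into a point of [P] in which only pairs through [j] can be close. *)
Lemma spread_or_unique_close_pair a b j : P a -> P b ->
  (forall x y, x \in S -> y \in S -> x <> y -> b y - b x <> a y - a x) -> j \in S ->
  (exists u, P u /\ spread M u) \/ (exists c i, P c /\ unique_close_pair c i j).
Proof.
move=> Pa Pb Hinj Hj.
have Qa : exists z, P (upd a j z) by exists (a j); rewrite P_upd_self.
have Qb : exists z, P (upd b j z) by exists (b j); rewrite P_upd_self.
have [N [HN [z Pz]]] := Hproj Hj Qa Qb (2 * M + 1 + 2 * abs_sum a S).
have SA : spread (2 * M) (extrap a b N).
  by move=> x y Hx Hy Hxy; apply: extrap_far _ Hx Hy (Hinj x y Hx Hy Hxy) _; lia.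
case: (classic (spread M (upd (extrap a b N) j z))) => [Sc | /(close_of_not_spread SA Hj)].
  by left; exists (upd (extrap a b N) j z).
by move=> [i [Hi Hij Hz]]; right; exists (upd (extrap a b N) j z), i; split; last exact: upd_unique_close_pair.
Qed.

Lemma extrap_closed_of_minors : extrap_closed P.
Proof.
move=> a b Pa Pb N0.
case: (classic (exists x y, [/\ x \in S, y \in S, x <> y & b y - b x = a y - a x])).
  by move=> [x [y [Hx Hy Hxy E]]]; exact: extrap_fixed_diff Hx Hy Hxy Pa Pb E N0.
move=> Hno; have Hinj x y : x \in S -> y \in S -> x <> y -> b y - b x <> a y - a x.
  by move=> Hx Hy Hxy E; apply: Hno; exists x, y.
apply: (spread_extrap _ Hinj N0).
have [j1 [j2 [j3 [H1 H2 H3 [E12 E13 E23]]]]] := three_distinct HU HS3.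
case: (spread_or_unique_close_pair Pa Pb Hinj H1) => [// | [c1 [i1 [P1 N1]]]].
case: (spread_or_unique_close_pair Pa Pb Hinj H2) => [// | [c2 [i2 [P2 N2]]]].
case: (spread_or_unique_close_pair Pa Pb Hinj H3) => [// | [c3 [i3 [P3 N3]]]].
case: (classic (same_pair i1 j1 i2 j2)) => Hsame; last exact: spread_of_close_pairs P1 N1 P2 N2 Hsame.
by apply: (spread_of_close_pairs P1 N1 P3 N3); move: Hsame; rewrite /same_pair; lia.
Qed.

End ArityReduction.

Lemma extrap_closed_small P S M : determined P S M -> (size S < 2)%nat -> extrap_closed P.
Proof.
move=> HD HS a b Pa _ N0; exists N0; split; first lia.
apply/(HD a) => // i j Hi Hj p _.
suff -> : i = j by rewrite !Z.sub_diag.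
by case: S HS Hi Hj {HD} => [|s [|]] //= _; rewrite !inE => /eqP -> /eqP ->.
Qed.

Lemma supported_subst P S i j d : uniq S -> supported P S -> i \in S -> i <> j ->
  supported (fun v => P (upd v j (v i + d))) (rem j S).
Proof.
move=> HU HS Hi Hij v w Hvw; have Hrem x : x \in S -> x <> j -> x \in rem j S.
  by move=> Hx Hxj; rewrite (mem_rem_uniq _ HU) inE Hx andbT; apply/eqP.
apply: HS => x Hx; rewrite /upd; case: eqP => [_ | Hxj]; first by rewrite Hvw // Hrem.
exact/Hvw/Hrem.
Qed.

Lemma supported_proj P S j : uniq S -> supported P S ->
  supported (fun v => exists z, P (upd v j z)) (rem j S).
Proof.
move=> HU HS v w Hvw.
suff E z : P (upd v j z) <-> P (upd w j z) by split => -[z /E Hz]; exists z.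
apply: HS => x Hx; rewrite /upd; case: eqP => // /eqP Hxj.
by apply: Hvw; rewrite (mem_rem_uniq _ HU) inE Hx andbT.
Qed.

Lemma extrap_closed_rename2 P al be : al <> be -> supported P [:: al; be] ->
  extrap_closed (fun v => P (ren al be (v 0%nat) (v 1%nat))) -> extrap_closed P.
Proof.
move=> Hab HS HCl a b Pa Pb N0.
pose s (k : nat) := if k == 0%nat then al else be.
have Hs v : P (ren al be ((v \o s) 0%nat) ((v \o s) 1%nat)) <-> P v by exact: (@ren_supported P al be v Hab HS).
have [N [HN PN]] := HCl (a \o s) (b \o s) (proj2 (Hs a) Pa) (proj2 (Hs b) Pb) N0.
by exists N; split => //; exact: (proj1 (Hs (extrap a b N)) PN).
Qed.

Section Reduction.
Variable G : structure.
Hypothesis Hfo : forall s : sym G, fo_definable (@interp G s).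
Hypothesis Hsuc : pp_definable G suc_rel.

Lemma binary_witness_of_pair P al be : al <> be -> pp_def G P -> supported P [:: al; be] ->
  ~ extrap_closed P -> exists R2 : relation 2, pp_definable G R2 /\ ~ horn_definable R2.
Proof.
move=> Hab HP HS HnC; exists (fun t => P (ren al be (t ord0) (t (@Ordinal 2 1 isT)))).
split; first exact: pp_def_rename2.
by move/extrap_closed_of_horn/(extrap_closed_rename2 Hab HS).
Qed.

Lemma binary_witness n : forall P S, size S = n -> uniq S -> pp_def G P -> supported P S ->
  ~ extrap_closed P -> exists R2 : relation 2, pp_definable G R2 /\ ~ horn_definable R2.
Proof.
elim/lt_wf_ind: n => n IH P S HsS HU HP HS HnC.
have [M [HM HD]] := pp_def_determined Hfo HP HS.
case: (ltnP (size S) 2) => [/(extrap_closed_small HD) // | H2].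
case: (ltnP (size S) 3) => H3.
  case: S H2 H3 HU HS {HsS HD} => [|al [|be [|]]] //= _ _.
  by rewrite inE andbT => /eqP Hab HS; exact: binary_witness_of_pair HS HnC.
have Hlt j : j \in S -> (size (rem j S) < n)%coq_nat by move=> Hj; rewrite size_rem -?HsS; lia.
case: (classic (exists i j d, [/\ i \in S, j \in S, i <> j &
  ~ extrap_closed (fun v => P (upd v j (v i + d)))])) => [[i [j [d [Hi Hj Hij Hn]]]] | Hsub].
  apply: (IH _ (Hlt j Hj) _ (rem j S) erefl (rem_uniq _ HU) _ _ Hn).
    exact: pp_def_subst.
  exact: supported_subst.
case: (classic (exists j, j \in S /\ ~ extrap_closed (fun v => exists z, P (upd v j z)))).
  move=> [j [Hj Hn]]; apply: (IH _ (Hlt j Hj) _ (rem j S) erefl (rem_uniq _ HU) _ _ Hn).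
    exact: pp_def_exists.
  exact: supported_proj.
move=> Hproj; case: HnC; apply: (extrap_closed_of_minors HM HU H3 HS HD).
  by move=> i j d Hi Hj Hij; apply: NNPP => Hn; apply: Hsub; exists i, j, d.
by move=> j Hj; apply: NNPP => Hn; apply: Hproj; exists j.
Qed.

End Reduction.

Theorem mainTheorem17 (G : structure) :
  fo_expansion G ->
  (exists (n : nat) (R : relation n), pp_definable G R /\ ~ horn_definable R) ->
  exists R2 : relation 2, pp_definable G R2 /\ ~ horn_definable R2.
Proof.
move=> [Hfo Hsuc] [n [R [HR Hnh]]].
have HS : supported (rel_pred R) (iota 0 n).
  move=> v w Hvw; rewrite /rel_pred.
  have -> // : (fun k : 'I_n => v k) = (fun k => w k).
  by apply: functional_extensionality => k; apply: Hvw; rewrite mem_iota /=.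
have [M [HM HD]] := pp_def_determined Hfo HR HS.
apply: (binary_witness Hfo Hsuc erefl (iota_uniq 0 n) HR HS) => HCl.
exact/Hnh/(horn_definable_of_closed HM HD HCl).
Qed.
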